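(* Let $\bar\rho>0$, $\bar\theta>0$, $R>0$, $c_v>0$, $\nu_0>0$, $k_0>0$ be constants and for $\xi\in\mathbb{R}$ let \[ A(\xi)=\begin{pmatrix}0&\bar\rho i\xi&0\\ \frac{R\bar\theta}{\bar\rho}i\xi&-\nu_0\xi^2&Ri\xi\\ 0&\frac{R\bar\theta}{c_v}i\xi&-k_0\xi^2\end{pmatrix}. \] Let $-\delta(\xi)$ be an eigenvalue of $A(\xi)$ (defined for $|\xi|$ large) with $\lim_{|\xi|\to\infty}\delta(\xi)=\omega_0:=R\bar\theta/\nu_0$. Then, for $\xi\neq0$, the vector $\left(1,\frac{i\delta(\xi)}{\bar\rho\xi},d_\delta(\xi)\right)$, where \[ d_\delta(\xi)=-\frac{\delta(\xi)^2-\nu_0\xi^2\delta(\xi)+R\bar\theta\xi^2}{R\bar\rho\xi^2}, \] is an eigenvector of $A(\xi)$ for the eigenvalue $-\delta(\xi)$, and for $|\xi|$ sufficiently large $|d_\delta(\xi)|\le C/|\xi|^2$ for some positive constant $C$.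
   Context: Such an eigenvalue branch $-\delta(\xi)$ exists for $|\xi|$ sufficiently large. *)

From HB Require Import structures.
From mathcomp Require Import all_boot all_order all_algebra.
From mathcomp Require Import complex.
From mathcomp Require Import reals.
Set Implicit Arguments. Unset Strict Implicit. Unset Printing Implicit Defensive.
Import Order.TTheory GRing.Theory Num.Theory.
Local Open Scope ring_scope.
Local Open Scope complex_scope.

(* The 3x3 complex matrix A(xi) of the paper; parameters
   rho = \bar\rho, th = \bar\theta, Rg = R, cv = c_v, nu = \nu_0, k = k_0. *)
Definition Amat (R : realType) (rho th Rg cv nu k xi : R) : 'M[R[i]]_3 :=
  \matrix_(a < 3, b < 3)
    nth 0 (nth [::]
      [:: [:: 0 ; (rho * xi) *i ; 0 ];
          [:: ((Rg * th / rho) * xi) *i ; (- (nu * xi ^+ 2))%:C ; (Rg * xi) *i ];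
          [:: 0 ; ((Rg * th / cv) * xi) *i ; (- (k * xi ^+ 2))%:C ] ] a) b.

Definition d_delta (R : realType) (rho th Rg nu : R) (delta : R -> R[i]) (xi : R) : R[i] :=
  - ((delta xi) ^+ 2 - (nu * xi ^+ 2)%:C * delta xi + (Rg * th * xi ^+ 2)%:C)
    / (Rg * rho * xi ^+ 2)%:C.

Definition evec (R : realType) (rho th Rg nu : R) (delta : R -> R[i]) (xi : R) : 'cV[R[i]]_3 :=
  \col_(a < 3)
    nth 0 [:: 1 ; 'i * delta xi / (rho * xi)%:C ; d_delta rho th Rg nu delta xi ] a.

From HB Require Import structures.
From mathcomp Require Import all_boot all_order all_algebra.
From mathcomp Require Import complex.
From mathcomp Require Import reals.
From mathcomp Require Import ring.
Set Implicit Arguments. Unset Strict Implicit. Unset Printing Implicit Defensive.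
Import Order.TTheory GRing.Theory Num.Theory.
Local Open Scope ring_scope.
Local Open Scope complex_scope.

(* Expanding det (A(xi) + delta) shows that an eigenvalue -delta of A(xi) is a
   root of the cubic (delta - k xi^2) q(delta) + (R^2 th / c_v) xi^2 delta, where
   q(delta) = delta^2 - nu xi^2 delta + R th xi^2 is the numerator of d_delta.
   The first two rows of A(xi) v = -delta v hold identically for the candidate v;
   the third row is exactly the cubic.  The cubic also gives
   d_delta = (R th / (c_v rho)) delta / (delta - k xi^2), and since delta stays
   bounded while k xi^2 grows, the denominator is at least k xi^2 / 2. *)

Lemma det_mx33 (R : comNzRingType) (A : 'M[R]_3) :
  \det A = A 0 0 * (A 1 1 * A 2 2 - A 1 2 * A 2 1)
         - A 0 1 * (A 1 0 * A 2 2 - A 1 2 * A 2 0)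
         + A 0 2 * (A 1 0 * A 2 1 - A 1 1 * A 2 0).
Proof.
pose a (i j : nat) := A (inord i) (inord j).
have Aa (i j : 'I_3) : A i j = a i j by rewrite /a !inord_val.
rewrite (expand_det_row _ 0) !big_ord_recl big_ord0 /cofactor.
rewrite !(expand_det_row _ 0) !big_ord_recl !big_ord0 /cofactor !det_mx11 !mxE.
by rewrite !Aa /= !(expr0, expr1, exprS); ring.
Qed.

Lemma eigenvalue_det (F : fieldType) n (A : 'M[F]_n) a :
  eigenvalue A a -> \det (A - a%:M) = 0.
Proof.
move=> /eigenvalueP [v Av v0]; apply/eqP/det0P; exists v => //.
by rewrite mulmxBr Av mul_mx_scalar subrr.
Qed.

Lemma mul_imag (R : rcfType) (x y : R) : x *i * y *i = - (x * y)%:C.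
Proof. by apply/eqP; rewrite eq_complex /= !mul0r !mulr0 sub0r addr0 oppr0 !eqxx. Qed.

Lemma Amat_char_eq (R : realType) (rho th Rg cv nu k xi : R) (d : R[i]) :
  rho != 0 -> eigenvalue (Amat rho th Rg cv nu k xi) (- d) ->
  (d - (k * xi ^+ 2)%:C) * (d ^+ 2 - (nu * xi ^+ 2)%:C * d + (Rg * th * xi ^+ 2)%:C)
    + (Rg * (Rg * th / cv) * xi ^+ 2)%:C * d = 0.
Proof.
move=> rho0 /eigenvalue_det; rewrite det_mx33 !mxE /=.
rewrite !(mulr0n, mulr1n, subr0, sub0r, opprK, mul0r, mulr0, addr0).
rewrite [_ *i * (_ * _)]mulrA !mul_imag => <-.
have -> : rho * xi * (Rg * th / rho * xi) = Rg * th * xi ^+ 2 by field.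
ring.
Qed.

Lemma imag_mul_i (R : rcfType) (x : R) : x *i * 'i = - x%:C.
Proof. by apply/eqP; rewrite eq_complex /= !mul0r !mulr0 mulr1 sub0r addr0 oppr0 !eqxx. Qed.

Lemma imagE (R : rcfType) (x : R) : x *i = x%:C * 'i.
Proof. by apply/eqP; rewrite eq_complex /= !mul0r !mulr0 mulr1 subr0 addr0 !eqxx. Qed.

Lemma d_delta_mul (R : realType) (rho th Rg cv nu k : R) (delta : R -> R[i]) (xi : R) :
  rho != 0 -> Rg != 0 -> cv != 0 -> xi != 0 ->
  eigenvalue (Amat rho th Rg cv nu k xi) (- delta xi) ->
  (delta xi - (k * xi ^+ 2)%:C) * d_delta rho th Rg nu delta xi
    = (Rg * th / (cv * rho))%:C * delta xi.
Proof.
move=> rho0 Rg0 cv0 xi0 /(Amat_char_eq rho0) /eqP; rewrite addr_eq0 => /eqP char.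
rewrite /d_delta mulNr mulrN mulrA char.
by field; rewrite !fmorph_eq0 rho0 cv0 xi0 Rg0.
Qed.

Lemma Amat_evec (R : realType) (rho th Rg cv nu k : R) (delta : R -> R[i]) (xi : R) :
  rho != 0 -> Rg != 0 -> cv != 0 -> xi != 0 ->
  eigenvalue (Amat rho th Rg cv nu k xi) (- delta xi) ->
  Amat rho th Rg cv nu k xi *m evec rho th Rg nu delta xi
    = (- delta xi) *: evec rho th Rg nu delta xi.
Proof.
move=> rho0 Rg0 cv0 xi0 eig; have hd := d_delta_mul rho0 Rg0 cv0 xi0 eig.
apply/matrixP => i j; rewrite (ord1 j) !mxE !big_ord_recl big_ord0 /= !mxE /=.
case: i => [[|[|[|i]]] hi] //=.
- rewrite 2![(rho * xi) *i * _]mulrA imag_mul_i.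
  by field; rewrite !fmorph_eq0 xi0 rho0.
- rewrite [(Rg * th / rho * xi) *i]imagE [(Rg * xi) *i]imagE /d_delta.
  by field; rewrite !fmorph_eq0 ?rho0 ?Rg0 ?xi0.
- rewrite 2![(Rg * th / cv * xi) *i * _]mulrA imag_mul_i.
  have -> : - delta xi * d_delta rho th Rg nu delta xi =
    - ((delta xi - (k * xi ^+ 2)%:C) * d_delta rho th Rg nu delta xi)
    - (k * xi ^+ 2)%:C * d_delta rho th Rg nu delta xi by ring.
  by rewrite hd; field; rewrite !fmorph_eq0 ?rho0 ?cv0 ?xi0.
Qed.

Lemma ler_norm_near (F : numFieldType) (z w : F) :
  0 <= w -> `|z - w| < 1 -> `|z| <= w + 1.
Proof.
move=> w0 zw; rewrite -[z](subrK w); apply: le_trans (ler_normD _ _) _.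
by rewrite (ger0_norm w0) [w + 1]addrC lerD2r ltW.
Qed.

Lemma norm_subr_ge_half (F : numFieldType) (z w K : F) :
  0 <= w -> `|z - w| < 1 -> 2 * (w + 1) <= K -> K / 2 <= `|z - K|.
Proof.
move=> w0 zw wK; have z_le := ler_norm_near w0 zw.
have K0 : 0 <= K by apply: le_trans wK; rewrite mulr_ge0 ?ler0n ?addr_ge0.
rewrite distrC; apply: le_trans (lerB_dist K z); rewrite ger0_norm //.
have -> : K / 2 = K - (w + 1) - (K - 2 * (w + 1)) / 2 by field.
apply: (@le_trans _ _ (K - (w + 1))); last by rewrite lerD2l lerN2.
by rewrite gerBl divr_ge0 ?subr_ge0 ?ler0n.
Qed.

Lemma norm_divr_subr_le (F : numFieldType) (z w K : F) :
  0 <= w -> `|z - w| < 1 -> 2 * (w + 1) <= K -> `|z / (z - K)| <= 2 * (w + 1) / K.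
Proof.
move=> w0 zw wK; have half := norm_subr_ge_half w0 zw wK.
have K0 : 0 < K by apply: lt_le_trans wK; rewrite mulr_gt0 ?ltr0n ?ltr_wpDl.
have K20 : 0 < K / 2 by rewrite divr_gt0 ?ltr0n.
have -> : 2 * (w + 1) / K = (w + 1) / (K / 2) by field; rewrite gt_eqF.
rewrite normrM normfV ler_pM ?invr_ge0 ?ler_norm_near //.
by rewrite lef_pV2 ?posrE // (lt_le_trans K20).
Qed.

Lemma norm_d_delta_le (R : realType) (rho th Rg cv nu k : R) (delta : R -> R[i])
    (xi w : R) :
  0 < rho -> 0 < th -> 0 < Rg -> 0 < cv -> 0 < k -> xi != 0 ->
  eigenvalue (Amat rho th Rg cv nu k xi) (- delta xi) ->
  0 <= w -> `|delta xi - w%:C| < 1 -> 2 * (w + 1) <= k * xi ^+ 2 ->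
  `|d_delta rho th Rg nu delta xi|
    <= (2 * (Rg * th / (cv * rho)) * (w + 1) / k / xi ^+ 2)%:C.
Proof.
move=> rho0 th0 Rg0 cv0 k0 xi0 eig w0 near wK.
set K := (k * xi ^+ 2)%:C; set c := Rg * th / (cv * rho).
have c0 : 0 < c by rewrite divr_gt0 ?mulr_gt0.
have K0 : 0 < K by rewrite ltcR mulr_gt0 ?exprn_even_gt0.
have wKC : 2 * (w%:C + 1) <= K.
  have -> : 2 * (w%:C + 1) = (2 * (w + 1))%:C :> R[i] by ring.
  by rewrite /K lecR.
have half : K / 2 <= `|delta xi - K|.
  by apply: norm_subr_ge_half near wKC; rewrite ler0c.
have dK0 : delta xi - K != 0.
  by rewrite -normr_gt0; apply: lt_le_trans half; rewrite divr_gt0 ?ltr0n.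
have -> : d_delta rho th Rg nu delta xi = c%:C * (delta xi / (delta xi - K)).
  apply: (mulfI dK0).
  rewrite (d_delta_mul (lt0r_neq0 rho0) (lt0r_neq0 Rg0) (lt0r_neq0 cv0) xi0 eig).
  by rewrite mulrCA [(delta xi - K) * _]mulrCA mulfV // mulr1.
rewrite normrM gtr0_norm ?ltcR //.
apply: (le_trans (y := c%:C * (2 * (w%:C + 1) / K))).
  by rewrite ler_pM2l ?ltcR // norm_divr_subr_le // ler0c.
suff -> : (2 * c * (w + 1) / k / xi ^+ 2)%:C = c%:C * (2 * (w%:C + 1) / K) by [].
by rewrite /K; field; rewrite !fmorph_eq0 xi0 (lt0r_neq0 k0).
Qed.

Theorem lemma2p7 (R : realType) (rho th Rg cv nu k : R)
  (hrho : 0 < rho) (hth : 0 < th) (hRg : 0 < Rg) (hcv : 0 < cv)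
  (hnu : 0 < nu) (hk : 0 < k)
  (delta : R -> R[i]) (M : R)
  (heig : forall xi : R, M < `|xi| ->
     eigenvalue (Amat rho th Rg cv nu k xi) (- delta xi))
  (hlim : forall eps : R, 0 < eps -> exists N : R, forall xi : R, N < `|xi| ->
     `|delta xi - (Rg * th / nu)%:C| < eps%:C) :
  (forall xi : R, M < `|xi| -> xi != 0 ->
     evec rho th Rg nu delta xi != 0 /\
     Amat rho th Rg cv nu k xi *m evec rho th Rg nu delta xi
       = (- delta xi) *: evec rho th Rg nu delta xi) /\
  (exists C : R, 0 < C /\ exists N : R, forall xi : R, N < `|xi| ->
     `|d_delta rho th Rg nu delta xi| <= (C / xi ^+ 2)%:C).
Proof.
split=> [xi xiM xi0 | ].
  split; last exact: Amat_evec (lt0r_neq0 hrho) (lt0r_neq0 hRg) (lt0r_neq0 hcv) xi0 (heig _ xiM).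
  by apply/negP => /eqP/matrixP/(_ 0 0); rewrite !mxE; apply/eqP/oner_neq0.
pose w := Rg * th / nu.
have w0 : 0 <= w by rewrite divr_ge0 ?mulr_ge0 ?ltW.
have [N1 hN1] := hlim 1 ltr01.
exists (2 * (Rg * th / (cv * rho)) * (w + 1) / k).
split; first by rewrite !(divr_gt0, mulr_gt0, ltr0n, ltr_wpDl).
exists (Num.max M (Num.max N1 (Num.max 1 (2 * (w + 1) / k)))) => xi.
rewrite !gt_max => /and4P[xiM xiN1 xi1 xiw].
have xi0 : xi != 0 by rewrite -normr_gt0 (lt_trans ltr01).
apply: norm_d_delta_le xi0 (heig _ xiM) w0 (hN1 _ xiN1) _ => //.
rewrite -ler_pdivrMl // mulrC -real_normK ?num_real // expr2.
by apply: le_trans (ltW xiw) _; rewrite ler_peMl ?ltW // (lt_trans ltr01).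
Qed.
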